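(* Let $v\in\mathrm{Box}(\Sigma_+)$ with $\gamma^v$ and $\gamma^v(t)$ ($t\in\mathcal I(y^v)$) as in the context. (i) If $1\notin\mathcal I(y^v)$, then $\mathcal S^{es}_+(\gamma^v)=\mathcal S_+(\gamma^v)$. If $1\in\mathcal I(y^v)$, then $\gamma^v(1)=\gamma^v$ and $\mathcal S_+(\gamma^v)\setminus\mathcal S^{es}_+(\gamma^v)=\mathcal S_-(\gamma^v)\setminus\mathcal S^{es}_-(\gamma^v)$. (ii) For every $t\in\mathcal I(y^v)$, the images of $\mathcal S^{es}_+(\gamma^v)$ and $\mathcal S^{es}_-(\gamma^v(t))$ under the projection $p:\mathbb L\to\mathbb L/\langle h\rangle$ coincide.
   Context: $N\cong\mathbb Z^d$ lattice, $\mathcal A=\{v_1,\dots,v_n\}\subset N$ generating $N$ with a homomorphism $\mathrm h:N\to\mathbb Z$, $\mathrm h(v_j)=1$; $\mathbb L=\{l\in\mathbb Z^n:\sum l_jv_j=0\}$; fix $\beta\in N$. $\Sigma_\pm$ are the fans supported on $\mathbb R_{\ge0}\mathrm{Conv}(\mathcal A)$ of two regular triangulations with vertices in $\mathcal A$ joined by an edge of the secondary polytope; there is a circuit $I$ with primitive relation $h\in\mathbb L$, $I_\pm=\{v_j:\pm h_j>0\}$, such that (with $\mathcal F\subset\mathcal A\setminus I$ separating if $\mathcal F\cup(I\setminus\{v\})$ generates a maximal cone of $\Sigma_\pm$ for all $v\in I_\pm$) $\Sigma_-$ arises from $\Sigma_+$ by replacing the maximal cones $\mathcal F\cup(I\setminus\{v\})$,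 $v\in I_+$, by $\mathcal F\cup(I\setminus\{v\})$, $v\in I_-$, for all separating $\mathcal F$; those cones are the essential maximal cones $\Sigma^{es}_\pm(d)$. $\mathrm{Box}(\Sigma_+)$: $v=\sum q^v_jv_j\in N$, $0\le q^v_j<1$, $q^v_j=0$ unless $v_j$ spans a ray of a fixed maximal cone of $\Sigma_+$; $y^v_j=e^{2\pi iq^v_j}$. $\mathcal I(r)=\{t\in\mathbb C^*:r_jt^{h_j}=1$ for some $j$ with $v_j\in I_-\}$. For $v\in\mathrm{Box}(\Sigma_+)$ choose $\gamma^v\in\mathbb Q^n$ with $e^{2\pi i\gamma^v_j}=y^v_j$ and $\sum\gamma^v_jv_j=\beta$; for each $t\in\mathcal I(y^v)$ (a root of unity) fix $\theta_t\in\mathbb Q$ with $e^{2\pi i\theta_t}=t$, with $\theta_1=0$, and set $\gamma^v(t)=\gamma^v+\theta_th$. For a fan $\Sigma$ (one of $\Sigma_\pm$), $\gamma\in\mathbb Q^n$ and $l\in\mathbb L$, $\mathrm{Supp}(l)=\{v_j:l_j+\gamma_j\notin\mathbb Z_{\ge0}\}$; $\mathcal S_\pm(\gamma)$ is the set of $l\in\mathbb L$ such that all elements of $\mathrm{Supp}(l)$ generate rays of one maximal cone of $\Sigma_\pm$, and $\mathcal S^{es}_\pm(\gamma)$ the set of $l$ such that this holds for one essential maximal cone of $\Sigma_\pm$. *)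

(* Lattice N = Z^d, A = {v_j : j < n}, all linear algebra over rat. *)
From HB Require Import structures.
From mathcomp Require Import all_boot all_order all_algebra.
Set Implicit Arguments. Unset Strict Implicit. Unset Printing Implicit Defensive.
Import Order.TTheory GRing.Theory Num.Theory.
Local Open Scope ring_scope.

Section Defs.
Variables (d n : nat) (v : 'I_n -> 'I_d -> int).

Definition isZ (x : rat) : Prop := exists z : int, x = z%:~R.
Definition isN (x : rat) : Prop := exists k : nat, x = k%:R.

Definition generates : Prop :=
  forall x : 'I_d -> int, exists c : 'I_n -> int,
    forall i, x i = \sum_(j < n) c j * v j i.

Definition inL (l : 'I_n -> int) : Prop :=
  forall i, \sum_(j < n) l j * v j i = 0.

Definition lin_indep (S : {set 'I_n}) : Prop :=
  forall c : 'I_n -> rat, (forall j, j \notin S -> c j = 0) ->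
    (forall i, \sum_(j < n) c j * (v j i)%:~R = 0) -> forall j, c j = 0.

Definition evalf (phi : 'I_d -> rat) (x : 'I_d -> int) : rat :=
  \sum_(i < d) phi i * (x i)%:~R.

Definition in_cone (S : pred 'I_n) (x : 'I_d -> rat) : Prop :=
  exists c : 'I_n -> rat, [/\ forall j, 0 <= c j,
    forall j, ~~ S j -> c j = 0 &
    forall i, x i = \sum_(j < n) c j * (v j i)%:~R].

(* T (its set of maximal cones, given by index sets) is the fan of a regular
   triangulation of Conv(A) with vertices in A: the cells are exactly the
   lower facets (for a height w) which are simplices, and they cover
   R_{>=0} Conv(A). *)
Definition regular_triangulation (T : {set {set 'I_n}}) : Prop :=
  (exists w : 'I_n -> rat, forall s : {set 'I_n},
     s \in T <-> [/\ #|s| = d, lin_indep s &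
       exists phi : 'I_d -> rat,
         (forall j, j \in s -> evalf phi (v j) = w j) /\
         (forall j, j \notin s -> evalf phi (v j) < w j)])
  /\ (forall x, in_cone predT x -> exists2 s, s \in T & in_cone (mem s) x).

Definition is_circuit (I : {set 'I_n}) : Prop :=
  ~ lin_indep I /\ forall J : {set 'I_n}, J \proper I -> lin_indep J.

Definition primitive_relation (I : {set 'I_n}) (hr : 'I_n -> int) : Prop :=
  [/\ inL hr, forall j, (hr j != 0) = (j \in I) &
      forall (l : 'I_n -> int) (k : int), inL l ->
        (forall j, hr j = k * l j) -> k = 1 \/ k = -1].

Definition Iplus (I : {set 'I_n}) (hr : 'I_n -> int) : {set 'I_n} :=
  [set j in I | 0 < hr j].
Definition Iminus (I : {set 'I_n}) (hr : 'I_n -> int) : {set 'I_n} :=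
  [set j in I | hr j < 0].

Definition separating (Tp : {set {set 'I_n}}) (I : {set 'I_n}) (hr : 'I_n -> int)
  : {set {set 'I_n}} :=
  [set F : {set 'I_n} | [disjoint F & I] &&
     [forall w in Iplus I hr, (F :|: (I :\ w)) \in Tp]].

Definition ess_plus Tp I hr : {set {set 'I_n}} :=
  [set F :|: (I :\ w) | F in separating Tp I hr, w in Iplus I hr].
Definition ess_minus Tp I hr : {set {set 'I_n}} :=
  [set F :|: (I :\ w) | F in separating Tp I hr, w in Iminus I hr].

(* l in S(gamma) for the set T of (maximal) cones:
   Supp(l) = {j : l_j + gamma_j not in Z_{>=0}} lies in one cone of T *)
Definition inS (T : {set {set 'I_n}}) (g : 'I_n -> rat) (l : 'I_n -> int) : Prop :=
  inL l /\ exists2 s, s \in T & forall j, ~ isN ((l j)%:~R + g j) -> j \in s.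

(* the box element sum q_j v_j lies in N *)
Definition in_lattice (q : 'I_n -> rat) : Prop :=
  forall i, isZ (\sum_(j < n) q j * (v j i)%:~R).

(* t = e^{2 pi i theta} lies in I(y) with y_j = e^{2 pi i q_j}:
   y_j t^{h_j} = 1 for some j in I_-, i.e. q_j + h_j theta in Z *)
Definition in_Iy (I : {set 'I_n}) (hr : 'I_n -> int) (q : 'I_n -> rat) (theta : rat) : Prop :=
  exists2 j, j \in Iminus I hr & isZ (q j + (hr j)%:~R * theta).

End Defs.

From HB Require Import structures.
From mathcomp Require Import all_boot all_order all_algebra.
From mathcomp Require Import zify ring.
Import Order.TTheory GRing.Theory Num.Theory.
Local Open Scope ring_scope.
Set Implicit Arguments. Unset Strict Implicit.

(* Both fans are regular: for heights [w] of [Sigma], a maximal cone is the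
   projection of a lower face [phi = w].  If one cone contained the negative
   part of the circuit relation [h] and another its positive part, the height
   [sum_j h_j w_j] would be positive when computed against the first face and
   nonpositive against the second.  Since an essential cone of [Sigma_+]
   contains [I_-] (and one of [Sigma_-] contains [I_+]), every cone of
   [Sigma_+] misses a point of [I_+] and every cone of [Sigma_-] a point of
   [I_-]; together with [Sigma_+ \ Sigma_+^es = Sigma_- \ Sigma_-^es] this
   gives (i).  For (ii), adding to [l] an integer multiple of [h] makes the
   coordinate at a chosen [j] of [I] a nonnegative integer and leaves the
   coordinates off [I] unchanged, so the support moves from the essential
   cone [F + I\{u}] to its neighbour [F + I\{j}]. *)

Lemma isZ_int (z : int) : isZ z%:~R.
Proof. by exists z. Qed.

Lemma isZ_add (x y : rat) : isZ x -> isZ y -> isZ (x + y).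
Proof. by move=> [a ->] [b ->]; exists (a + b); rewrite intrD. Qed.

Lemma isZ_sub (x y : rat) : isZ x -> isZ y -> isZ (x - y).
Proof. by move=> [a ->] [b ->]; exists (a - b); rewrite intrB. Qed.

Lemma isN_isZ (x : rat) : isN x -> isZ x.
Proof. by move=> [k ->]; exists (Posz k). Qed.

Lemma isZ_ge0_isN (x : rat) : isZ x -> 0 <= x -> isN x.
Proof. by move=> [[k|k] ->]; [exists k | rewrite ler0z]. Qed.

Lemma isZ_shift_isN (x : rat) (c : int) : isZ x -> c != 0 ->
  exists k : int, isN (x + (k * c)%:~R).
Proof.
move=> [m ->] c_neq0; exists (`|m| * c).
have c2_gt0 : 0 < c * c by rewrite lt0r mulf_neq0 //= -expr2 sqr_ge0.
by rewrite -intrD; apply: isZ_ge0_isN; [exact: isZ_int | rewrite ler0z; nia].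
Qed.

Lemma sum_eq0_exists_gt0 (R : realDomainType) (T : finType) (x : T -> R) (i0 : T) :
  \sum_i x i = 0 -> x i0 != 0 -> exists i, 0 < x i.
Proof.
move=> sum0 xi0; case: (pickP [pred i | 0 < x i]) => [i xi | no_pos]; first by exists i.
have xN_ge0 i (_ : true) : 0 <= - x i by rewrite oppr_ge0 leNgt; exact: negbT (no_pos i).
have sumN0 : \sum_i - x i = 0 by rewrite sumrN sum0 oppr0.
by move/eqP: (psumr_eq0P xN_ge0 sumN0 (i := i0) isT); rewrite oppr_eq0 (negbTE xi0).
Qed.

Lemma sum_eq0_exists_lt0 (R : realDomainType) (T : finType) (x : T -> R) (i0 : T) :
  \sum_i x i = 0 -> x i0 != 0 -> exists i, x i < 0.
Proof.
move=> sum0 xi0; have sumN0 : \sum_i - x i = 0 by rewrite sumrN sum0 oppr0.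
have [i] : exists i, 0 < - x i.
  by apply: (@sum_eq0_exists_gt0 R T (fun i => - x i) i0 sumN0); rewrite oppr_eq0.
by rewrite oppr_gt0; exists i.
Qed.

Section Supports.
Variables (n : nat) (J : {set 'I_n}) (h : 'I_n -> int).
Hypothesis h_supp : forall j, (h j != 0) = (j \in J).

Lemma mem_Iplus j : (j \in Iplus J h) = (0 < h j).
Proof. by rewrite inE -h_supp andb_idl // => /gt_eqF ->. Qed.

Lemma mem_Iminus j : (j \in Iminus J h) = (h j < 0).
Proof. by rewrite inE -h_supp andb_idl // => /lt_eqF ->. Qed.

Lemma notin_supp_eq0 j : j \notin J -> h j = 0.
Proof. by rewrite -h_supp negbK => /eqP. Qed.

End Supports.

Definition supp_within (n : nat) (g : 'I_n -> rat) (l : 'I_n -> int) (s : {set 'I_n}) :=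
  forall j, ~ isN ((l j)%:~R + g j) -> j \in s.

Section Cells.
Variables (n : nat) (J F : {set 'I_n}).

Lemma mem_cell u j : j \in J -> j != u -> j \in F :|: (J :\ u).
Proof. by rewrite !inE => -> ->; rewrite orbT. Qed.

Lemma supp_within_swap (g : 'I_n -> rat) l (s : {set 'I_n}) u w :
  supp_within g l s -> supp_within g l (F :|: (J :\ w)) -> u \notin s ->
  supp_within g l (F :|: (J :\ u)).
Proof.
move=> in_s in_cell u_s j lj; have := in_cell j lj; rewrite !inE.
case/orP => [-> // | /andP [_ jJ]]; rewrite jJ andbT; apply/orP; right.
by apply: contraNneq u_s => <-; exact: in_s.
Qed.

Lemma supp_within_shift (h : 'I_n -> int) (g g' : 'I_n -> rat) (theta : rat) l u j1 :
  (forall j, j \notin J -> h j = 0) -> (forall j, g' j = g j + theta * (h j)%:~R) ->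
  supp_within g l (F :|: (J :\ u)) -> h j1 != 0 -> isZ ((l j1)%:~R + g' j1) ->
  exists k : int, supp_within g' (fun j => l j + k * h j) (F :|: (J :\ j1)).
Proof.
move=> h_out g'E in_cell hj1 lj1Z; have [k lj1N] := isZ_shift_isN lj1Z hj1.
exists k => j /= ljN; have [jJ | jNJ] := boolP (j \in J).
  apply: mem_cell => //; apply: contraPneq ljN => ->.
  by rewrite intrD addrAC.
have := in_cell j; rewrite !inE (negbTE jNJ) !andbF !orbF; apply.
by move: ljN; rewrite g'E h_out // !mulr0 !addr0.
Qed.

End Cells.

Section Relations.
Variables (d n : nat) (v : 'I_n -> 'I_d -> int).

Lemma lin_indep_set0 : lin_indep v set0.
Proof. by move=> c c0 _ j; apply: c0; rewrite inE. Qed.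

Lemma dependent_not_subset (s J : {set 'I_n}) :
  lin_indep v s -> ~ lin_indep v J -> ~~ (J \subset s).
Proof.
move=> s_indep J_dep; apply/negP => /subsetP Js; apply: J_dep => c c0 c_rel.
apply: s_indep c_rel => j js; apply: c0; apply: contraNN js; exact: Js.
Qed.

Lemma inL_add_scale (l h : 'I_n -> int) (k : int) :
  inL v l -> inL v h -> inL v (fun j => l j + k * h j).
Proof.
move=> l_rel h_rel i; under eq_bigr => j _ do rewrite mulrDl -mulrA.
by rewrite big_split /= l_rel -big_distrr /= h_rel mulr0 addr0.
Qed.

Lemma inS_subset (T1 T2 : {set {set 'I_n}}) g l :
  T1 \subset T2 -> inS v T1 g l -> inS v T2 g l.
Proof. by move=> /subsetP T12 [l_rel [s /T12 sT ls]]; split=> //; exists s. Qed.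

Lemma relation_evalf (h : 'I_n -> int) (phi : 'I_d -> rat) :
  inL v h -> \sum_(j < n) (h j)%:~R * evalf phi (v j) = 0.
Proof.
move=> h_rel; under eq_bigr => j _ do rewrite big_distrr /=.
rewrite exchange_big /=; apply: big1 => i _.
transitivity (phi i * (\sum_(j < n) h j * v j i)%:~R); last by rewrite h_rel mulr0.
by rewrite rmorph_sum big_distrr /=; apply: eq_bigr => j _; rewrite intrM; ring.
Qed.

Lemma relation_sum_eq0 (hh : 'I_d -> int) (h : 'I_n -> int) :
  (forall j, \sum_(i < d) hh i * v j i = 1) -> inL v h -> \sum_j h j = 0.
Proof.
move=> hhP h_rel.
transitivity (\sum_(j < n) h j * \sum_(i < d) hh i * v j i).
  by apply: eq_bigr => j _; rewrite hhP mulr1.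
under eq_bigr => j _ do rewrite big_distrr /=.
rewrite exchange_big /=; apply: big1 => i _.
transitivity (hh i * \sum_(j < n) h j * v j i); last by rewrite h_rel mulr0.
by rewrite big_distrr; apply: eq_bigr => j _ /=; ring.
Qed.

Section LowerCell.
Variables (w : 'I_n -> rat) (s : {set 'I_n}) (phi : 'I_d -> rat).
Hypothesis phi_on : forall j, j \in s -> evalf phi (v j) = w j.
Hypothesis phi_below : forall j, j \notin s -> evalf phi (v j) < w j.

Let slack j := w j - evalf phi (v j).

Lemma slack_ge0 j : 0 <= slack j.
Proof.
rewrite /slack; have [/phi_on -> | /phi_below /ltW] := boolP (j \in s).
  by rewrite subrr.
by rewrite subr_ge0.
Qed.

Lemma relation_height_slack (h : 'I_n -> int) : inL v h ->
  \sum_j (h j)%:~R * w j = \sum_j (h j)%:~R * slack j.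
Proof.
move=> h_rel; under [RHS]eq_bigr => j _ do rewrite mulrBr.
by rewrite sumrB relation_evalf // subr0.
Qed.

Lemma relation_height_gt0 (h : 'I_n -> int) j1 : inL v h ->
  (forall j, h j < 0 -> j \in s) -> 0 < h j1 -> j1 \notin s ->
  0 < \sum_j (h j)%:~R * w j.
Proof.
move=> h_rel neg_s hj1 j1s; rewrite relation_height_slack // (bigD1 j1) //=.
apply: ltr_pwDl; first by rewrite mulr_gt0 ?ltr0z // subr_gt0 phi_below.
apply: sumr_ge0 => j _; have [/neg_s js | hj] := ltrP (h j) 0.
  by rewrite /slack phi_on // subrr mulr0.
by rewrite mulr_ge0 ?ler0z ?slack_ge0.
Qed.

Lemma relation_height_le0 (h : 'I_n -> int) : inL v h ->
  (forall j, 0 < h j -> j \in s) -> \sum_j (h j)%:~R * w j <= 0.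
Proof.
move=> h_rel pos_s; rewrite relation_height_slack //; apply: sumr_le0 => j _.
have [/pos_s js | hj] := ltrP 0 (h j); first by rewrite /slack phi_on // subrr mulr0.
by rewrite mulr_le0_ge0 ?lerz0 ?slack_ge0.
Qed.

End LowerCell.

Section DependentRelation.
Variables (T : {set {set 'I_n}}) (J : {set 'I_n}) (h : 'I_n -> int).
Hypotheses (T_reg : regular_triangulation v T) (h_rel : inL v h).
Hypotheses (h_supp : forall j, (h j != 0) = (j \in J)) (J_dep : ~ lin_indep v J).

Lemma relation_not_split s1 s2 : s1 \in T -> s2 \in T ->
  (forall j, h j < 0 -> j \in s1) -> (forall j, 0 < h j -> j \in s2) -> False.
Proof.
case: T_reg => [[w cellP] _] s1T s2T neg_s1 pos_s2.
have [_ s1_indep [phi1 [on1 below1]]] := (cellP s1).1 s1T.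
have [_ _ [phi2 [on2 below2]]] := (cellP s2).1 s2T.
have /subsetPn [j jJ js1] := dependent_not_subset s1_indep J_dep.
have hj : 0 < h j.
  rewrite lt_neqAle eq_sym h_supp jJ leNgt /=.
  by apply: contraNN js1; exact: neg_s1.
have := relation_height_gt0 on1 below1 h_rel neg_s1 hj js1.
by rewrite ltNge (relation_height_le0 on2 below2 h_rel pos_s2).
Qed.

Lemma exists_pos_notin_cell s1 s2 : s1 \in T -> s2 \in T ->
  (forall j, h j < 0 -> j \in s1) -> exists2 j, 0 < h j & j \notin s2.
Proof.
move=> s1T s2T neg_s1.
case: (pickP [pred j | (0 < h j) && (j \notin s2)]) => [j /andP [] | none].
  by exists j.
exfalso; apply: (relation_not_split s1T s2T neg_s1) => j hj.
by apply: contraFT (none j) => /= js; rewrite hj.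
Qed.

Lemma exists_neg_notin_cell s1 s2 : s1 \in T -> s2 \in T ->
  (forall j, 0 < h j -> j \in s1) -> exists2 j, h j < 0 & j \notin s2.
Proof.
move=> s1T s2T pos_s1.
case: (pickP [pred j | (h j < 0) && (j \notin s2)]) => [j /andP [] | none].
  by exists j.
exfalso; apply: (relation_not_split s2T s1T _ pos_s1) => j hj.
by apply: contraFT (none j) => /= js; rewrite hj.
Qed.

End DependentRelation.

End Relations.

Section WallCrossing.
Variables (d n : nat) (v : 'I_n -> 'I_d -> int) (hh : 'I_d -> int).
Variables (Tp Tm : {set {set 'I_n}}) (I : {set 'I_n}) (hr : 'I_n -> int).
Hypothesis hhP : forall j, \sum_(i < d) hh i * v j i = 1.
Hypotheses (Tp_reg : regular_triangulation v Tp) (Tm_reg : regular_triangulation v Tm).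
Hypothesis Tp_neq_Tm : Tp != Tm.
Hypothesis I_dep : ~ lin_indep v I.
Hypotheses (hr_rel : inL v hr) (hr_supp : forall j, (hr j != 0) = (j \in I)).
Hypothesis Tm_def : Tm = (Tp :\: ess_plus Tp I hr) :|: ess_minus Tp I hr.

Local Notation Ep := (ess_plus Tp I hr).
Local Notation Em := (ess_minus Tp I hr).
Local Notation sep := (separating Tp I hr).

Lemma ess_plus_subset : Ep \subset Tp.
Proof.
apply/subsetP => _ /imset2P [F u + uP ->].
by rewrite inE => /andP [_ /forall_inP]; apply.
Qed.

Lemma ess_minus_subset : Em \subset Tm.
Proof. by rewrite Tm_def subsetUr. Qed.

Lemma separating_exists : exists F, F \in sep.
Proof.
have [sep0 | [F]] := set_0Vmem sep; last by exists F.
have ess0 (f : {set 'I_n} -> 'I_n -> {set 'I_n}) K : [set f F u | F in sep, u in K] = set0.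
  by apply/setP => x; rewrite inE; apply/imset2P => -[F u]; rewrite sep0 inE.
by case/eqP: Tp_neq_Tm; rewrite Tm_def /ess_plus /ess_minus !ess0 setD0 setU0.
Qed.

Lemma ess_plus_cell F u : F \in sep -> u \in Iplus I hr -> F :|: (I :\ u) \in Ep.
Proof. by move=> Fsep uP; apply/imset2P; exists F u. Qed.

Lemma ess_minus_cell F w : F \in sep -> w \in Iminus I hr -> F :|: (I :\ w) \in Em.
Proof. by move=> Fsep wP; apply/imset2P; exists F w. Qed.

Lemma Iplus_Iminus_nonempty : (exists u, u \in Iplus I hr) /\ (exists w, w \in Iminus I hr).
Proof.
have /subsetPn [j0 j0I _] := dependent_not_subset (@lin_indep_set0 _ _ v) I_dep.
have hj0 : hr j0 != 0 by rewrite hr_supp.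
have sum0 := relation_sum_eq0 hhP hr_rel.
have [u hu] := sum_eq0_exists_gt0 sum0 hj0; have [w hw] := sum_eq0_exists_lt0 sum0 hj0.
by split; [exists u; rewrite mem_Iplus | exists w; rewrite mem_Iminus].
Qed.

Lemma Iminus_in_cell F u : u \in Iplus I hr -> forall j, hr j < 0 -> j \in F :|: (I :\ u).
Proof.
move=> uP j hj; apply: mem_cell; first by rewrite -hr_supp lt_eqF.
by apply: contraTneq uP => <-; rewrite mem_Iplus // -leNgt ltW.
Qed.

Lemma Iplus_in_cell F w : w \in Iminus I hr -> forall j, 0 < hr j -> j \in F :|: (I :\ w).
Proof.
move=> wP j hj; apply: mem_cell; first by rewrite -hr_supp gt_eqF.
by apply: contraTneq wP => <-; rewrite mem_Iminus // -leNgt ltW.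
Qed.

Lemma Tp_cell_misses_Iplus s : s \in Tp -> exists2 u, u \in Iplus I hr & u \notin s.
Proof.
move=> sTp; have [F Fsep] := separating_exists; have [[u uP] _] := Iplus_Iminus_nonempty.
have cellTp : F :|: (I :\ u) \in Tp.
  by apply: (subsetP ess_plus_subset); exact: ess_plus_cell.
have [j hj js] := exists_pos_notin_cell Tp_reg hr_rel hr_supp I_dep cellTp sTp
  (Iminus_in_cell F uP).
by exists j; rewrite ?mem_Iplus.
Qed.

Lemma Tm_cell_misses_Iminus s : s \in Tm -> exists2 w, w \in Iminus I hr & w \notin s.
Proof.
move=> sTm; have [F Fsep] := separating_exists; have [_ [w wP]] := Iplus_Iminus_nonempty.
have cellTm : F :|: (I :\ w) \in Tm.
  by apply: (subsetP ess_minus_subset); exact: ess_minus_cell.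
have [j hj js] := exists_neg_notin_cell Tm_reg hr_rel hr_supp I_dep cellTm sTm
  (Iplus_in_cell F wP).
by exists j; rewrite ?mem_Iminus.
Qed.

(* Off [I(y)] the support contains [I_-], which no cone of [Sigma_-] does. *)
Lemma inS_ess_plus_iff (g q : 'I_n -> rat) l :
  (forall j, isZ (g j - q j)) -> ~ in_Iy I hr q 0 ->
  inS v Ep g l <-> inS v Tp g l.
Proof.
move=> gq notIy; split; first exact: inS_subset ess_plus_subset.
case=> l_rel [s sTp ls]; split=> //; exists s => //.
have neg_s j : hr j < 0 -> j \in s.
  move=> hj; apply: ls => ljN; apply: notIy; exists j; first by rewrite mem_Iminus.
  have -> : q j + (hr j)%:~R * 0 = (l j)%:~R + g j - (l j)%:~R - (g j - q j) by ring.
  by apply: isZ_sub; [apply: isZ_sub; [exact: isN_isZ | exact: isZ_int] | exact: gq].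
apply: contraT => sNEp; have sTm : s \in Tm by rewrite Tm_def !inE sNEp sTp.
have [w wP] := Tm_cell_misses_Iminus sTm.
by rewrite neg_s // -(mem_Iminus hr_supp).
Qed.

Lemma inS_nonessential_iff (g : 'I_n -> rat) l :
  (inS v Tp g l /\ ~ inS v Ep g l) <-> (inS v Tm g l /\ ~ inS v Em g l).
Proof.
split=> -[[l_rel [s sT ls]] notS]; split.
- have sNEp : s \notin Ep by apply/negP => sEp; apply: notS; split=> //; exists s.
  by split=> //; exists s; rewrite // Tm_def !inE sNEp sT.
- case=> _ [_ /imset2P [F w Fsep wP ->] l_cell]; apply: notS; split=> //.
  have [u uP us] := Tp_cell_misses_Iplus sT.
  exists (F :|: (I :\ u)); first exact: ess_plus_cell.
  exact: supp_within_swap ls l_cell us.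
- have sNEm : s \notin Em by apply/negP => sEm; apply: notS; split=> //; exists s.
  split=> //; exists s => //.
  by move: sT; rewrite Tm_def in_setU (negbTE sNEm) orbF in_setD => /andP [].
- case=> _ [_ /imset2P [F u Fsep uP ->] l_cell]; apply: notS; split=> //.
  have [w wP ws] := Tm_cell_misses_Iminus sT.
  exists (F :|: (I :\ w)); first exact: ess_minus_cell.
  exact: supp_within_swap ls l_cell ws.
Qed.

Lemma ess_plus_shift_ess_minus (g q : 'I_n -> rat) (theta : rat) l :
  (forall j, isZ (g j - q j)) -> in_Iy I hr q theta -> inS v Ep g l ->
  exists k : int, inS v Em (fun j => g j + theta * (hr j)%:~R) (fun j => l j + k * hr j).
Proof.
move=> gq [j1 j1P qj1Z] [l_rel [_ /imset2P [F u Fsep _ ->] l_cell]].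
have hj1 : hr j1 != 0 by rewrite lt_eqF // -(mem_Iminus hr_supp).
have lj1Z : isZ ((l j1)%:~R + (g j1 + theta * (hr j1)%:~R)).
  have -> : (l j1)%:~R + (g j1 + theta * (hr j1)%:~R)
      = (l j1)%:~R + (g j1 - q j1) + (q j1 + (hr j1)%:~R * theta) by ring.
  by apply: isZ_add => //; apply: isZ_add; [exact: isZ_int | exact: gq].
have [k lk] := supp_within_shift (notin_supp_eq0 hr_supp) (fun j => erefl) l_cell hj1 lj1Z.
exists k; split; first exact: inL_add_scale.
by exists (F :|: (I :\ j1)); first exact: ess_minus_cell.
Qed.

Lemma ess_minus_shift_ess_plus (g q : 'I_n -> rat) (theta : rat) (s0 : {set 'I_n}) l :
  s0 \in Tp -> (forall j, q j != 0 -> j \in s0) -> (forall j, isZ (g j - q j)) ->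
  inS v Em (fun j => g j + theta * (hr j)%:~R) l ->
  exists k : int, inS v Ep g (fun j => l j + k * hr j).
Proof.
move=> s0Tp qs0 gq [l_rel [_ /imset2P [F w Fsep _ ->] l_cell]].
have [u uP us0] := Tp_cell_misses_Iplus s0Tp.
have hu : hr u != 0 by rewrite lt0r_neq0 // -(mem_Iplus hr_supp).
have qu0 : q u = 0 by apply/eqP; exact: contraNT (@qs0 u) us0.
have luZ : isZ ((l u)%:~R + g u).
  by rewrite -[g u]subr0 -qu0; apply: isZ_add; [exact: isZ_int | exact: gq].
have gE j : g j = g j + theta * (hr j)%:~R + - theta * (hr j)%:~R by rewrite mulNr addrK.
have [k lk] := supp_within_shift (notin_supp_eq0 hr_supp) gE l_cell hu luZ.
exists k; split; first exact: inL_add_scale.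
by exists (F :|: (I :\ u)); first exact: ess_plus_cell.
Qed.

End WallCrossing.

Theorem proposition4p6 (d n : nat) (v : 'I_n -> 'I_d -> int)
  (hh : 'I_d -> int) (beta : 'I_d -> int)
  (Tp Tm : {set {set 'I_n}}) (I : {set 'I_n}) (hr : 'I_n -> int) :
  injective v -> generates v ->
  (forall j, \sum_(i < d) hh i * v j i = 1) ->
  regular_triangulation v Tp -> regular_triangulation v Tm -> Tp != Tm ->
  is_circuit v I -> primitive_relation v I hr ->
  Tm = (Tp :\: ess_plus Tp I hr) :|: ess_minus Tp I hr ->
  forall (s0 : {set 'I_n}) (q : 'I_n -> rat),
    s0 \in Tp -> (forall j, 0 <= q j < 1) -> (forall j, q j != 0 -> j \in s0) ->
    in_lattice v q ->
  forall g : 'I_n -> rat,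
    (forall j, isZ (g j - q j)) ->
    (forall i, \sum_(j < n) g j * (v j i)%:~R = (beta i)%:~R) ->
  [/\ (~ in_Iy I hr q 0 ->
         forall l, inS v (ess_plus Tp I hr) g l <-> inS v Tp g l),
      (in_Iy I hr q 0 ->
         forall l, (inS v Tp g l /\ ~ inS v (ess_plus Tp I hr) g l) <->
                   (inS v Tm g l /\ ~ inS v (ess_minus Tp I hr) g l)) &
      forall theta : rat, in_Iy I hr q theta ->
        let gt := fun j => g j + theta * (hr j)%:~R in
        (forall l, inS v (ess_plus Tp I hr) g l ->
           exists k : int, inS v (ess_minus Tp I hr) gt (fun j => l j + k * hr j)) /\
        (forall l, inS v (ess_minus Tp I hr) gt l ->
           exists k : int, inS v (ess_plus Tp I hr) g (fun j => l j + k * hr j))].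
Proof.
move=> _ _ hhP Tp_reg Tm_reg Tp_neq_Tm [I_dep _] [hr_rel hr_supp _] Tm_def.
move=> s0 q s0Tp _ qs0 _ g gq _.
split=> [notIy l | _ l | theta Iy gt].
- exact: (inS_ess_plus_iff hhP Tm_reg Tp_neq_Tm I_dep hr_rel hr_supp Tm_def l gq notIy).
- exact: (inS_nonessential_iff hhP Tp_reg Tm_reg Tp_neq_Tm I_dep hr_rel hr_supp Tm_def).
- split=> l; first exact: (ess_plus_shift_ess_minus hr_rel hr_supp gq Iy).
  exact: (ess_minus_shift_ess_plus hhP Tp_reg Tp_neq_Tm I_dep hr_rel hr_supp Tm_def
            s0Tp qs0 gq).
Qed.
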